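(* Let $n\ge 1$ and let $\mathcal{OCT}_n$ be the semigroup of all order-preserving full contractions of $[n]=\{1,\dots,n\}$. Let $\textnormal{Reg}(\mathcal{OCT}_n)$ be the set of regular elements of $\mathcal{OCT}_n$. Then $$|\textnormal{Reg}(\mathcal{OCT}_n)|=\frac{n(n-1)(2n-1)+6n}{6}.$$
   Context: $\mathcal{T}_n$ is the semigroup (under composition) of all maps $[n]\to[n]$. A map $\alpha\in\mathcal{T}_n$ is a contraction if $|x\alpha-y\alpha|\le |x-y|$ for all $x,y\in[n]$, and order-preserving if $x\le y$ implies $x\alpha\le y\alpha$. $\mathcal{OCT}_n$ is the set of order-preserving contractions, a subsemigroup of $\mathcal{T}_n$. An element $\alpha\in\mathcal{OCT}_n$ is regular if there is $\beta\in\mathcal{OCT}_n$ with $\alpha\beta\alpha=\alpha$. *)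

From mathcomp Require Import all_boot all_order.
Set Implicit Arguments. Unset Strict Implicit. Unset Printing Implicit Defensive.

(* [n] = {1,..,n} is modelled by 'I_n = {0,..,n-1} (a shift, which does not
   affect order or distances).  Maps [n] -> [n] are finite functions. *)

Definition distn (x y : nat) : nat := (x - y) + (y - x).

Definition is_contraction n (a : {ffun 'I_n -> 'I_n}) : bool :=
  [forall x : 'I_n, forall y : 'I_n, distn (a x) (a y) <= distn x y].

Definition is_order_preserving n (a : {ffun 'I_n -> 'I_n}) : bool :=
  [forall x : 'I_n, forall y : 'I_n, (x <= y) ==> (a x <= a y)].

Definition in_OCT n (a : {ffun 'I_n -> 'I_n}) : bool :=
  is_order_preserving a && is_contraction a.

(* product in T_n with maps written on the right: x(ab) = (xa)b *)
Definition tmul n (a b : {ffun 'I_n -> 'I_n}) : {ffun 'I_n -> 'I_n} :=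
  [ffun x => b (a x)].

Definition Reg_OCT n : {set {ffun 'I_n -> 'I_n}} :=
  [set a | in_OCT a && [exists b, in_OCT b && (tmul (tmul a b) a == a)]].

(* An order-preserving contraction A of {0..m} has an interval [a, a + k] as
   image.  If A B A = A, then A B fixes this interval pointwise, so B is
   injective on it; an injective order-preserving contraction of an interval
   is a translation, onto some [s, s + k], and A maps [s, s + k] back onto
   [a, a + k].  By monotonicity A is then a + min(k, max(0, x - s)).
   Conversely every such map is regular, with the map for (s, k, a) as
   inverse.  The parameters are unique up to s being irrelevant when k = 0:
   this gives n constants and (n - k)^2 maps for each 1 <= k < n, i.e.
   n + 1^2 + ... + (n - 1)^2 regular elements. *)

From mathcomp Require Import all_boot all_order zify.

Set Implicit Arguments.
Unset Strict Implicit.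
Unset Printing Implicit Defensive.

Definition oct_on m (f : nat -> nat) : Prop :=
  forall x y, x <= y <= m -> f x <= f y <= f x + (y - x).

(* [x - s] is truncated: [clamp a k s] equals [a] up to [s], then rises with
   slope 1 until it reaches [a + k]. *)
Definition clamp a k s x : nat := a + minn k (x - s).

Lemma oct_on_clamp m a k s : oct_on m (clamp a k s).
Proof. move=> x y /andP [le_xy _]; rewrite /clamp; lia. Qed.

Lemma clampK a k s x : clamp a k s (clamp s k a (clamp a k s x)) = clamp a k s x.
Proof. rewrite /clamp; lia. Qed.

Lemma oct_on_attain m f y : oct_on m f -> f 0 <= y <= f m ->
  exists2 x, x <= m & f x = y.
Proof.
move=> Hf hy; suff: forall j, j <= m -> y <= f j -> exists2 x, x <= m & f x = y.
  by move/(_ m (leqnn m)); apply; case/andP: hy.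
elim=> [|j IH] le_jm le_yfj; first by exists 0 => //; lia.
have [le_yfj'|lt_fjy] := leqP y (f j); first by apply: IH => //; lia.
by exists j.+1 => //; have := Hf j j.+1; lia.
Qed.

Lemma oct_on_shift m f g c k : oct_on m f -> c + k <= m ->
  {in [pred x | c <= x <= c + k], cancel f g} ->
  forall j, j <= k -> f (c + j) = f c + j.
Proof.
move=> Hf le_ckm fK; elim=> [|j IH] le_jk; first by rewrite !addn0.
have /eqP ne : f (c + j.+1) != f (c + j).
  apply/eqP => /(congr1 g); rewrite !fK ?inE; lia.
have := Hf (c + j) (c + j.+1); rewrite IH; lia.
Qed.

Lemma oct_on_clamp_eq m f a k s : oct_on m f -> s + k <= m ->
  f 0 = a -> f m = a + k -> (forall j, j <= k -> f (s + j) = a + j) ->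
  forall x, x <= m -> f x = clamp a k s x.
Proof.
move=> Hf le_skm f0 fm fs x le_xm; rewrite /clamp.
have [le_xs|lt_sx] := leqP x s.
  by have := Hf 0 x; have := Hf x s; have := fs 0 (leq0n k); rewrite addn0; lia.
have [le_x_sk|lt_sk_x] := leqP x (s + k).
  by have := fs (x - s); rewrite subnKC; lia.
by have := Hf (s + k) x; have := Hf x m; have := fs k; lia.
Qed.

Lemma oct_on_regular m A B : oct_on m A -> oct_on m B ->
  (forall x, A x <= m) -> (forall x, B x <= m) ->
  (forall x, x <= m -> A (B (A x)) = A x) ->
  exists a k s, [/\ a + k <= m, s + k <= m &
    forall x, x <= m -> A x = clamp a k s x].
Proof.
move=> HA HB Am Bm ABA; set a := A 0; set k := A m - a.
have Am_eq : A m = a + k by have := HA 0 m; rewrite /k /a; lia.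
have le_akm : a + k <= m by rewrite -Am_eq.
have BK : {in [pred y | a <= y <= a + k], cancel B A}.
  move=> y; rewrite inE -Am_eq => /(oct_on_attain HA) [x le_xm <-].
  exact: ABA.
set s := B a.
have Bs := oct_on_shift HB le_akm BK.
have As j : j <= k -> A (s + j) = a + j by move=> le_jk; rewrite -Bs // BK ?inE; lia.
have le_skm : s + k <= m by rewrite -Bs.
by exists a, k, s; split=> //; apply: oct_on_clamp_eq.
Qed.

Lemma tmulE n (f g : {ffun 'I_n -> 'I_n}) x : tmul f g x = g (f x).
Proof. by rewrite ffunE. Qed.

Lemma in_OCT_oct_on m (f : {ffun 'I_m.+1 -> 'I_m.+1}) :
  in_OCT f <-> oct_on m (fun x => f (inord x)).
Proof.
split.
  case/andP=> /forallP op /forallP ct x y /andP [le_xy le_ym].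
  have le_xm : x <= m := leq_trans le_xy le_ym.
  have := implyP (forallP (op (inord x)) (inord y)).
  have := forallP (ct (inord x)) (inord y).
  rewrite /distn !inordK ?ltnS //; lia.
move=> Hf; apply/andP; split; apply/forallP=> x; apply/forallP=> y;
  have := Hf x y; have := Hf y x; rewrite !inord_val !(ltnSE (ltn_ord _)) !andbT.
  by move=> _ fxy; apply/implyP => /fxy /andP [].
by rewrite /distn; case: (leqP x y) => [|/ltnW] le; lia.
Qed.

Definition clampf m a k s : {ffun 'I_m.+1 -> 'I_m.+1} :=
  [ffun x : 'I_m.+1 => inord (clamp a k s x)].

Lemma clampfE m a k s x : a + k <= m -> clampf m a k s x = clamp a k s x :> nat.
Proof. by move=> le_akm; rewrite ffunE inordK // ltnS /clamp; lia. Qed.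

Lemma in_OCT_clampf m a k s : a + k <= m -> in_OCT (clampf m a k s).
Proof.
move=> le_akm; apply/in_OCT_oct_on => x y /andP [le_xy le_ym].
rewrite !clampfE // !inordK ?ltnS //; last exact: leq_trans le_ym.
by apply: (oct_on_clamp (m := m)); rewrite le_xy le_ym.
Qed.

Lemma clampf_regular m a k s : a + k <= m -> s + k <= m ->
  clampf m a k s \in Reg_OCT m.+1.
Proof.
move=> le_akm le_skm.
rewrite inE in_OCT_clampf //; apply/existsP; exists (clampf m s k a).
rewrite in_OCT_clampf //; apply/eqP/ffunP => x; apply: ord_inj.
by rewrite !tmulE !clampfE // clampK.
Qed.

Lemma Reg_OCT_clampf m f : f \in Reg_OCT m.+1 ->
  exists a k s, [/\ a + k <= m, s + k <= m & f = clampf m a k s].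
Proof.
rewrite inE => /andP [/in_OCT_oct_on Hf /existsP [g /andP [/in_OCT_oct_on Hg /eqP fgf]]].
pose A x := nat_of_ord (f (inord x)); pose B x := nat_of_ord (g (inord x)).
have bounded (h : {ffun 'I_m.+1 -> 'I_m.+1}) x : h (inord x) <= m.
  by rewrite -ltnS ltn_ord.
have ABA x : x <= m -> A (B (A x)) = A x.
  by move=> _; rewrite /A /B !inord_val -[in RHS]fgf !tmulE.
have [a [k [s [le_akm le_skm fE]]]] := oct_on_regular Hf Hg (bounded f) (bounded g) ABA.
exists a, k, s; split=> //; apply/ffunP => x; apply: ord_inj.
by rewrite clampfE // -[x]inord_val -fE ?inordK // ltnSE.
Qed.

Lemma clamp_params_eq m a k s a' k' s' : s + k <= m -> s' + k' <= m ->
  {in [pred x | x <= m], clamp a k s =1 clamp a' k' s'} ->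
  [/\ a = a', k = k' & 0 < k -> s = s'].
Proof.
move=> le_skm le_s'k'm E.
have := E 0; have := E m; rewrite !inE /clamp leqnn => /(_ isT) Em /(_ isT) E0.
have ea : a = a' by lia.
have ek : k = k' by lia.
split=> // k_gt0.
have := E s.+1; have := E s'.+1; rewrite !inE /clamp; lia.
Qed.

(* [clamp a 0 s] does not depend on [s], so [s] is normalised to [0] when
   [k = 0]. *)
Definition clamp_params m : {set 'I_m.+1 * 'I_m.+1 * 'I_m.+1} :=
  [set p : 'I_m.+1 * 'I_m.+1 * 'I_m.+1 | let: (a, k, s) := p in
           [&& a + k <= m, s + k <= m & (k == 0 :> nat) ==> (s == 0 :> nat)]].

Definition clampf_of m (p : 'I_m.+1 * 'I_m.+1 * 'I_m.+1) : {ffun 'I_m.+1 -> 'I_m.+1} :=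
  let: (a, k, s) := p in clampf m a k s.

Lemma Reg_OCT_imset m : Reg_OCT m.+1 = [set clampf_of p | p in clamp_params m].
Proof.
apply/setP => f; apply/idP/imsetP => [/Reg_OCT_clampf [a [k [s [le_akm le_skm ->]]]]|].
  have [->|k_gt0] := posnP k.
    exists (inord a, inord 0, inord 0); first by rewrite inE /= !inordK //; lia.
    apply/ffunP => x; apply: ord_inj; rewrite /= !inordK ?ltnS //; last lia.
    by rewrite !clampfE // /clamp; lia.
  by exists (inord a, inord k, inord s); rewrite ?inE /= !inordK //; lia.
case=> [[[a k] s]]; rewrite inE => /and3P [le_akm le_skm _] ->.
exact: clampf_regular.
Qed.

Lemma clampf_of_inj m : {in clamp_params m &, injective (@clampf_of m)}.
Proof.
move=> [[a k] s] [[a' k'] s']; rewrite !inE /=.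
move=> /and3P [le_akm le_skm k0s] /and3P [le_a'k'm le_s'k'm k'0s'] E.
have /clamp_params_eq : {in [pred x | x <= m], clamp a k s =1 clamp a' k' s'}.
  move=> x; rewrite inE -ltnS => lt_xm.
  by have := congr1 (fun g : {ffun _} => nat_of_ord (g (Ordinal lt_xm))) E; rewrite /= !clampfE.
case=> // /ord_inj ea /ord_inj ek es; rewrite ea ek; congr (_, _, _).
apply: ord_inj; have [k_0|/es //] := posnP k.
by move: k0s k'0s'; rewrite -ek k_0 /= => /eqP -> /eqP ->.
Qed.

Lemma sum_ord_addn_leq m k : \sum_(i < m.+1) (i + k <= m) = m.+1 - k.
Proof.
suff /(_ m.+1) : forall N, \sum_(i < N) (i + k <= m) = minn N (m.+1 - k) by lia.
elim=> [|N IH]; first by rewrite big_ord0 min0n.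
by rewrite big_ord_recr /= IH; case: leqP; lia.
Qed.

Lemma sum_sqr_rev m : 6 * \sum_(i < m) (m - i) ^ 2 = m * m.+1 * (2 * m).+1.
Proof.
elim: m => [|m IH]; first by rewrite big_ord0.
rewrite big_ord_recl subn0 mulnDr.
under eq_bigr do rewrite /bump /= subSS.
rewrite IH; nia.
Qed.

Lemma card_clamp_params m : #|clamp_params m| = m.+1 + \sum_(i < m) (m - i) ^ 2.
Proof.
have -> : #|clamp_params m| = \sum_(a < m.+1) \sum_(k < m.+1) \sum_(s < m.+1)
    ((a + k <= m) * ((s + k <= m) && ((k == 0 :> nat) ==> (s == 0 :> nat)))).
  rewrite !pair_bigA -sum1_card big_mkcond /=.
  by apply: eq_bigr => [[[a k] s]] _; rewrite inE mulnb; case: ifP.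
rewrite exchange_big big_ord_recl -big_distrlr /= sum_ord_addn_leq subn0.
congr (_ + _).
  by rewrite big_ord_recl big1 ?muln1 // => i _; rewrite andbF.
apply: eq_bigr => k _; rewrite -big_distrlr /= sum_ord_addn_leq.
by under eq_bigr do rewrite andbT; rewrite sum_ord_addn_leq.
Qed.

Theorem theorem2 (n : nat) (hn : 1 <= n) :
  6 * #|Reg_OCT n| = n * (n - 1) * (2 * n - 1) + 6 * n.
Proof.
case: n hn => [//|m] _.
rewrite Reg_OCT_imset card_in_imset; last exact: clampf_of_inj.
rewrite card_clamp_params mulnDr sum_sqr_rev; nia.
Qed.
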